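(* On $\Omega=\mathbb R$ with $N=3$ phases, let $\delta_1=\frac1{64}$, $\delta_2=\frac5{16}$ and define the nonnegative kernels $K_{1,2}=K_{2,1}=\mathbf 1_{[-1,1]}$ and $K_{1,3}=K_{3,1}=K_{2,3}=K_{3,2}=\delta_1(\mathbf 1_{[-11,-9]}+\mathbf 1_{[9,11]})+\delta_2\mathbf 1_{[-1,1]}$. Let $\sigma_{i,j}=\frac12\int_{\mathbb R}|x|K_{i,j}(x)\,dx$ and $\mu_{i,j}=\frac{1}{2K_{i,j}(0)}$ for $i\ne j$ (so $\sigma_{1,2}=\frac12$, $\sigma_{1,3}=\sigma_{2,3}=20\delta_1+\frac{\delta_2}2$, $\mu_{1,2}=\frac12$, $\mu_{1,3}=\mu_{2,3}=\frac1{2\delta_2}$), with $\sigma_{i,i}=\mu_{i,i}^{-1}=0$. Then: (i) $\sigma$ satisfies the triangle inequality $\sigma_{i,j}+\sigma_{j,k}\ge\sigma_{i,k}$ for all $i,j,k$; (ii) both $\sigma$ and the matrix $(\mu_{i,j}^{-1})$ are conditionally negative semi-definite; (iii) for $\epsilon>0$ let $u_{1,\epsilon}=\mathbf 1_{[\epsilon,\infty)}$, $u_{2,\epsilon}=\mathbf 1_{(-\infty,-\epsilon]}$, $u_{3,\epsilon}=\mathbf 1_{[-\epsilon,\epsilon]}$; then for every $\epsilon>0$, \[ E_\epsilon(\boldsymbol u_\epsilon,\boldsymbol K):=\frac1\epsilon\sum_{(i,j)\in\mathcal I_3}\int_{\mathbb R}u_{j,\epsilon}\,(K_{i,j})_\epsilon*u_{i,\epsilon}\,dx=16\delta_1+2\delta_2=\tfrac78,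 \] while $\boldsymbol u_\epsilon\to\boldsymbol u_0=(\mathbf 1_{[0,\infty)},\mathbf 1_{(-\infty,0]},0)$ in $L^1(\mathbb R)$ and the sharp-interface energy of the limit is $E(\boldsymbol u_0,\sigma)=\sum_{(i,j)\in\mathcal I_3}\sigma_{i,j}\mathcal H^0(\partial\Sigma_i\cap\partial\Sigma_j)=2\sigma_{1,2}=1$. Consequently $\liminf_{\epsilon\to0}E_\epsilon(\boldsymbol u_\epsilon,\boldsymbol K)<E(\boldsymbol u_0,\sigma)$, so the nonlocal multiphase energies do not $\Gamma$-converge to $E(\cdot,\sigma)$. Moreover, the reciprocal mobilities do not satisfy the triangle inequality ($\mu_{1,2}^{-1}>\mu_{1,3}^{-1}+\mu_{3,2}^{-1}$).
   Context: $\mathcal I_3=\{(i,j)\in\{1,2,3\}^2:i\ne j\}$; $K_\epsilon(x)=\epsilon^{-1}K(x/\epsilon)$. A symmetric matrix $A$ is conditionally negative semi-definite if $\sum_{i,j}A_{i,j}\xi_i\xi_j\le0$ whenever $\sum_i\xi_i=0$. For $\boldsymbol u_0$, $\Sigma_1=[0,\infty)$, $\Sigma_2=(-\infty,0]$, $\Sigma_3=\emptyset$. *)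

From Stdlib Require Import Reals Lra List.
Import ListNotations.
Open Scope R_scope.

Definition IInt (f : R -> R) (l : R) : Prop :=
  (forall a b, a <= b -> inhabited (Riemann_integrable f a b)) /\
  (forall eta, 0 < eta -> exists M, 0 <= M /\
     forall a b (pr : Riemann_integrable f a b),
       a <= -M -> M <= b -> Rabs (RiemannInt pr - l) < eta).

Definition ind (a b : R) (x : R) : R :=
  if Rle_dec a x then (if Rle_dec x b then 1 else 0) else 0.
Definition ind_ge (a : R) (x : R) : R := if Rle_dec a x then 1 else 0.
Definition ind_le (a : R) (x : R) : R := if Rle_dec x a then 1 else 0.

Definition delta1 : R := 1 / 64.
Definition delta2 : R := 5 / 16.

(* kernels K_{i,j}, phases indexed by 1,2,3; K_{i,i} is unused (set to 0) *)
Definition K (i j : nat) : R -> R :=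
  match i, j with
  | 1%nat, 2%nat | 2%nat, 1%nat => ind (-1) 1
  | 1%nat, 3%nat | 3%nat, 1%nat | 2%nat, 3%nat | 3%nat, 2%nat =>
      fun x => delta1 * (ind (-11) (-9) x + ind 9 11 x) + delta2 * ind (-1) 1 x
  | _, _ => fun _ => 0
  end.

Definition Keps (eps : R) (k : R -> R) (x : R) : R := / eps * k (x / eps).

Definition I3 : list (nat * nat) := [(1,2); (1,3); (2,1); (2,3); (3,1); (3,2)]%nat.
Definition sumI3 (F : nat -> nat -> R) : R :=
  fold_right (fun p acc => F (fst p) (snd p) + acc) 0 I3.
Definition idx3 : list nat := [1; 2; 3]%nat.
Definition sum3 (F : nat -> R) : R := fold_right (fun i acc => F i + acc) 0 idx3.

Definition mu (i j : nat) : R := / (2 * K i j 0).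
Definition muinv (i j : nat) : R := if Nat.eqb i j then 0 else / mu i j.

Definition cnsd (A : nat -> nat -> R) : Prop :=
  forall xi : nat -> R, sum3 xi = 0 ->
    sum3 (fun i => sum3 (fun j => A i j * xi i * xi j)) <= 0.

Definition u (eps : R) (i : nat) : R -> R :=
  match i with
  | 1%nat => ind_ge eps
  | 2%nat => ind_le (- eps)
  | 3%nat => ind (- eps) eps
  | _ => fun _ => 0
  end.

Definition u0 (i : nat) : R -> R :=
  match i with
  | 1%nat => ind_ge 0
  | 2%nat => ind_le 0
  | _ => fun _ => 0
  end.

Definition Eeps_is (eps : R) (l : R) : Prop :=
  exists (c : nat -> nat -> R -> R) (e : nat -> nat -> R),
    (forall i j, In (i, j) I3 ->
       (forall x, IInt (fun y => Keps eps (K i j) (x - y) * u eps i y) (c i j x)) /\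
       IInt (fun x => u eps j x * c i j x) (e i j)) /\
    l = / eps * sumI3 e.

Definition Sigma (i : nat) (x : R) : Prop :=
  match i with
  | 1%nat => 0 <= x
  | 2%nat => x <= 0
  | _ => False
  end.

Definition closure (S : R -> Prop) (x : R) : Prop :=
  forall e, 0 < e -> exists y, S y /\ Rabs (y - x) < e.
Definition bdry (S : R -> Prop) (x : R) : Prop :=
  closure S x /\ closure (fun y => ~ S y) x.

Definition H0_is (P : R -> Prop) (n : nat) : Prop :=
  exists l : list R, NoDup l /\ (forall x, P x <-> In x l) /\ length l = n.

Definition Esharp_is (sigma : nat -> nat -> R) (v : R) : Prop :=
  exists n : nat -> nat -> nat,
    (forall i j, In (i, j) I3 ->
       H0_is (fun x => bdry (Sigma i) x /\ bdry (Sigma j) x) (n i j)) /\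
    v = sumI3 (fun i j => sigma i j * INR (n i j)).

(* Every quantity is the integral of a piecewise affine function with compact
   support, hence an explicit computation. Both sigma and mu^{-1} have the shape
   a on the pair {1,2} and b on the pairs involving phase 3, with (a, b) equal to
   (1/2, 15/32) and (2, 5/8) respectively. For such a matrix the triangle
   inequality means a <= 2b, whereas conditional negative semi-definiteness only
   needs a <= 4b; mu^{-1} lies in the gap. The far bumps of K_{1,3} enter
   sigma_{1,3} with the weight |x| ~ 10, which pays for the triangle inequality;
   but a layer of phase 3 of width 2 eps between phases 1 and 2 makes each of the
   four interactions with phase 3 cost only eps (4 delta1 + delta2 / 2), so
   E_eps = 16 delta1 + 2 delta2 = 7/8 < 1 = 2 sigma_{1,2}. *)

From Stdlib Require Import Reals Lra List.
From Coquelicot Require Import Coquelicot.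
Import ListNotations.
Open Scope R_scope.

(** * Improper integrals *)

(* [IInt] with Coquelicot's total [RInt] in place of the proof-carrying [RiemannInt]. *)
Definition is_IRInt (f : R -> R) (l : R) : Prop :=
  (forall a b, ex_RInt f a b) /\
  (forall eta, 0 < eta -> exists M, 0 <= M /\
     forall a b, a <= -M -> M <= b -> Rabs (RInt f a b - l) < eta).

Lemma is_IRInt_IInt f l : is_IRInt f l -> IInt f l.
Proof.
  intros [Hex Hlim]; split.
  - intros a b _; constructor; apply ex_RInt_Reals_0, Hex.
  - intros eta Heta; destruct (Hlim eta Heta) as [M [HM HMl]].
    exists M; split; [exact HM|].
    intros a b pr Ha Hb; rewrite <- RInt_Reals; auto.
Qed.

Lemma IInt_unique f l1 l2 : IInt f l1 -> IInt f l2 -> l1 = l2.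
Proof.
  intros [Hint H1] [_ H2].
  destruct (Req_dec l1 l2) as [|Hne]; [assumption|exfalso].
  set (eta := Rabs (l1 - l2) / 2).
  assert (Heta : 0 < eta) by (unfold eta; pose proof (Rabs_pos_lt (l1 - l2)); lra).
  destruct (H1 eta Heta) as [M1 [HM1 HL1]]; destruct (H2 eta Heta) as [M2 [HM2 HL2]].
  pose proof (Rmax_l M1 M2); pose proof (Rmax_r M1 M2).
  destruct (Hint (- Rmax M1 M2) (Rmax M1 M2) ltac:(lra)) as [pr].
  specialize (HL1 _ _ pr ltac:(lra) ltac:(lra)); specialize (HL2 _ _ pr ltac:(lra) ltac:(lra)).
  assert (Rabs (l1 - l2) <= Rabs (RiemannInt pr - l2) + Rabs (RiemannInt pr - l1)).
  { replace (l1 - l2) with ((RiemannInt pr - l2) - (RiemannInt pr - l1)) by ring.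
    eapply Rle_trans; [apply Rabs_triang|]; rewrite Rabs_Ropp; lra. }
  unfold eta in *; lra.
Qed.

Lemma is_IRInt_ext f g l : (forall x, f x = g x) -> is_IRInt f l -> is_IRInt g l.
Proof.
  intros Efg [Hex Hlim]; split.
  - intros a b; apply ex_RInt_ext with f; auto.
  - intros eta Heta; destruct (Hlim eta Heta) as [M [HM HMl]]; exists M; split; auto.
    intros a b Ha Hb; rewrite <- (RInt_ext f g); auto.
Qed.

Lemma is_IRInt_eq f l l' : is_IRInt f l -> l = l' -> is_IRInt f l'.
Proof. now intros H <-. Qed.

Lemma is_IRInt_plus f g lf lg :
  is_IRInt f lf -> is_IRInt g lg -> is_IRInt (fun x => f x + g x) (lf + lg).
Proof.
  intros [Fex Flim] [Gex Glim]; split.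
  - intros a b; apply (ex_RInt_plus f g); auto.
  - intros eta Heta.
    destruct (Flim (eta / 2) ltac:(lra)) as [M1 [HM1 HF]].
    destruct (Glim (eta / 2) ltac:(lra)) as [M2 [HM2 HG]].
    pose proof (Rmax_l M1 M2); pose proof (Rmax_r M1 M2).
    exists (Rmax M1 M2); split; [lra|]; intros a b Ha Hb.
    specialize (HF a b ltac:(lra) ltac:(lra)); specialize (HG a b ltac:(lra) ltac:(lra)).
    rewrite (RInt_plus f g) by auto.
    change (plus (RInt f a b) (RInt g a b)) with (RInt f a b + RInt g a b).
    replace (RInt f a b + RInt g a b - (lf + lg))
      with ((RInt f a b - lf) + (RInt g a b - lg)) by ring.
    eapply Rle_lt_trans; [apply Rabs_triang|]; lra.
Qed.

Lemma is_IRInt_scal k f l : is_IRInt f l -> is_IRInt (fun x => k * f x) (k * l).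
Proof.
  intros [Fex Flim]; split.
  - intros a b; apply (ex_RInt_scal f); auto.
  - intros eta Heta.
    pose proof (Rabs_pos k).
    destruct (Flim (eta / (Rabs k + 1))) as [M [HM HF]];
      [apply Rdiv_lt_0_compat; lra|].
    exists M; split; [exact HM|]; intros a b Ha Hb.
    rewrite (RInt_scal f) by auto.
    change (scal k (RInt f a b)) with (k * RInt f a b).
    replace (k * RInt f a b - k * l) with (k * (RInt f a b - l)) by ring.
    rewrite Rabs_mult.
    specialize (HF a b Ha Hb).
    apply Rmult_lt_compat_l with (r := Rabs k + 1) in HF; [|lra].
    replace ((Rabs k + 1) * (eta / (Rabs k + 1))) with eta in HF by (field; lra).
    pose proof (Rabs_pos (RInt f a b - l)); nra.
Qed.

Lemma RInt_vanishing f a b :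
  (forall x, Rmin a b < x < Rmax a b -> f x = 0) -> RInt f a b = 0.
Proof.
  intros H; rewrite (RInt_ext f (fun _ => 0)) by auto.
  rewrite RInt_const; apply Rmult_0_r.
Qed.

Lemma ex_RInt_vanishing f a b :
  (forall x, Rmin a b < x < Rmax a b -> f x = 0) -> ex_RInt f a b.
Proof.
  intros H; apply (ex_RInt_ext (fun _ => 0)); [|apply ex_RInt_const].
  intros x Hx; symmetry; auto.
Qed.

Section CompactSupport.

Variables (f : R -> R) (p q : R).
Hypothesis f_supp : forall x, x < p \/ q < x -> f x = 0.
Hypothesis f_int : ex_RInt f p q.

Lemma ex_RInt_compact_support a b : ex_RInt f a b.
Proof.
  assert (Hwide : forall m M, m <= p -> q <= M -> ex_RInt f m M).
  { intros m M Hm HM.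
    apply (ex_RInt_Chasles f m p M);
      [apply ex_RInt_vanishing; intros x Hx; apply f_supp; left;
       rewrite Rmax_right in Hx; lra|].
    apply (ex_RInt_Chasles f p q M); [exact f_int|].
    apply ex_RInt_vanishing; intros x Hx; apply f_supp; right;
      rewrite Rmin_left in Hx; lra. }
  assert (Hle : forall a b, a <= b -> ex_RInt f a b).
  { intros a' b' Hab.
    pose proof (Rmin_l a' p); pose proof (Rmax_l b' q).
    apply (ex_RInt_Chasles_1 f a' b' (Rmax b' q)); [lra|].
    apply (ex_RInt_Chasles_2 f (Rmin a' p) a' (Rmax b' q)); [lra|].
    apply Hwide; [apply Rmin_r|apply Rmax_r]. }
  destruct (Rle_dec a b); [auto|apply ex_RInt_swap, Hle; lra].
Qed.

Lemma is_IRInt_compact_support : is_IRInt f (RInt f p q).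
Proof.
  split; [exact ex_RInt_compact_support|].
  intros eta Heta; exists (Rmax (Rabs p) (Rabs q)); split.
  - eapply Rle_trans; [apply Rabs_pos|apply Rmax_l].
  - intros a b Ha Hb.
    pose proof (Rmax_l (Rabs p) (Rabs q)); pose proof (Rmax_r (Rabs p) (Rabs q)).
    pose proof (Rabs_maj2 p); pose proof (RRle_abs q).
    rewrite <- (RInt_Chasles f a p b), <- (RInt_Chasles f p q b)
      by apply ex_RInt_compact_support.
    rewrite (RInt_vanishing f a p), (RInt_vanishing f q b).
    2: intros x Hx; apply f_supp; right; rewrite Rmin_left in Hx; lra.
    2: intros x Hx; apply f_supp; left; rewrite Rmax_right in Hx; lra.
    change (plus 0 (plus (RInt f p q) 0)) with (0 + (RInt f p q + 0)).
    replace (0 + (RInt f p q + 0) - RInt f p q) with 0 by ring.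
    rewrite Rabs_R0; exact Heta.
Qed.

End CompactSupport.

Lemma continuous_affine al be x : continuous (fun x => al * x + be) x.
Proof.
  apply (ex_derive_continuous (K := R_AbsRing) (V := R_NormedModule)).
  auto_derive; auto.
Qed.

Lemma RInt_affine al be p q :
  RInt (fun x => al * x + be) p q = al * (q * q - p * p) / 2 + be * (q - p).
Proof.
  apply is_RInt_unique.
  set (F := fun x => al * x * x / 2 + be * x).
  replace (al * (q * q - p * p) / 2 + be * (q - p)) with (minus (F q) (F p))
    by (unfold F, minus, plus, opp; simpl; field).
  apply (is_RInt_derive (V := R_CompleteNormedModule) F).
  - intros x _; unfold F; auto_derive; auto; field.
  - intros x _; apply continuous_affine.
Qed.

Ltac ind_cases := unfold ind, ind_ge, ind_le, Rmax, Rmin, Rabs in *;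
  repeat match goal with
  | |- context [Rle_dec ?a ?b] =>
    lazymatch a with context [Rle_dec _ _] => fail | _ =>
    lazymatch b with context [Rle_dec _ _] => fail | _ =>
    destruct (Rle_dec a b); try (exfalso; lra) end end
  | |- context [Rcase_abs ?a] =>
    lazymatch a with context [Rle_dec _ _] => fail | _ =>
    destruct (Rcase_abs a); try (exfalso; lra) end
  end;
  try lra.

Lemma is_IRInt_ind_affine p q al be : p <= q ->
  is_IRInt (fun x => ind p q x * (al * x + be)) (al * (q * q - p * p) / 2 + be * (q - p)).
Proof.
  intros Hpq.
  assert (Eaff : forall x, Rmin p q < x < Rmax p q ->
            al * x + be = ind p q x * (al * x + be)).
  { intros x Hx; rewrite Rmin_left, Rmax_right in Hx by lra; ind_cases. }
  rewrite <- RInt_affine, (RInt_ext _ _ _ _ Eaff).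
  apply is_IRInt_compact_support.
  - intros x Hx; ind_cases.
  - apply (ex_RInt_ext _ _ _ _ Eaff).
    apply (ex_RInt_continuous (V := R_CompleteNormedModule)); intros; apply continuous_affine.
Qed.

Lemma is_IRInt_0 f : (forall x, f x = 0) -> is_IRInt f 0.
Proof.
  intros Hf; eapply is_IRInt_eq.
  - apply (is_IRInt_compact_support f 0 0); [intros; apply Hf|].
    apply ex_RInt_vanishing; intros; apply Hf.
  - exact (RInt_point (V := R_CompleteNormedModule) 0 f).
Qed.

Definition seg_len (p q : R) : R := Rmax p q - p.

Lemma is_IRInt_ind p q : is_IRInt (ind p q) (seg_len p q).
Proof.
  unfold seg_len; destruct (Rle_dec p q).
  - rewrite Rmax_right by lra.
    eapply is_IRInt_eq; [eapply is_IRInt_ext; [|apply (is_IRInt_ind_affine p q 0 1); lra]|].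
    + intros x; cbv beta; ring.
    + lra.
  - rewrite Rmax_left, Rminus_diag by lra.
    apply is_IRInt_0; intros x; ind_cases.
Qed.

(** * The nonlocal energies *)

Lemma in_I3 i j : In (i, j) I3 <-> In i idx3 /\ In j idx3 /\ i <> j.
Proof.
  split.
  - intros H; repeat destruct H as [H|H]; try injection H as <- <-; try contradiction;
      cbn; intuition congruence.
  - intros (Hi & Hj & Hij); repeat destruct Hi as [<-|Hi]; repeat destruct Hj as [<-|Hj];
      try contradiction; cbn; tauto.
Qed.

Definition step (ks : list (R * R * R)) (z : R) : R :=
  fold_right (fun '(w, a, b) acc => w * ind a b z + acc) 0 ks.

Definition kernel_steps (i j : nat) : list (R * R * R) :=
  if (i + j =? 3)%nat then [(1, -1, 1)]
  else [(delta1, -11, -9); (delta1, 9, 11); (delta2, -1, 1)].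

Lemma K_step i j z : In (i, j) I3 -> K i j z = step (kernel_steps i j) z.
Proof.
  intros H; repeat destruct H as [H|H]; try injection H as <- <-; try contradiction;
    cbn; ring.
Qed.

Lemma ind_scale eps a b x y : 0 < eps ->
  ind a b ((x - y) / eps) = ind (x - b * eps) (x - a * eps) y.
Proof.
  intros Heps.
  assert (Hz : x - y = (x - y) / eps * eps) by (field; lra).
  set (z := (x - y) / eps) in *.
  unfold ind.
  destruct (Rle_dec a z), (Rle_dec z b), (Rle_dec (x - b * eps) y),
    (Rle_dec y (x - a * eps)); auto; exfalso; nra.
Qed.

(* [phase_lo eps i p, phase_hi eps i q] is [p, q] intersected with the support of u eps i. *)
Definition phase_lo (eps : R) (i : nat) (p : R) : R :=
  match i with 1%nat => Rmax p eps | 2%nat => p | _ => Rmax p (- eps) end.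
Definition phase_hi (eps : R) (i : nat) (q : R) : R :=
  match i with 1%nat => q | 2%nat => Rmin q (- eps) | _ => Rmin q eps end.

Lemma ind_mul_phase eps i p q y : In i idx3 ->
  ind p q y * u eps i y = ind (phase_lo eps i p) (phase_hi eps i q) y.
Proof. intros H; repeat destruct H as [<-|H]; try contradiction; cbn; ind_cases. Qed.

Definition conv_phase (eps : R) (i : nat) (ks : list (R * R * R)) (x : R) : R :=
  fold_right (fun '(w, a, b) acc =>
    w * (/ eps * seg_len (phase_lo eps i (x - b * eps)) (phase_hi eps i (x - a * eps))) + acc)
    0 ks.

Lemma is_IRInt_conv_step eps i ks x : 0 < eps -> In i idx3 ->
  is_IRInt (fun y => Keps eps (step ks) (x - y) * u eps i y) (conv_phase eps i ks x).
Proof.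
  intros Heps Hi; induction ks as [|[[w a] b] ks IH]; cbn.
  - apply is_IRInt_0; intros; unfold Keps; cbn; ring.
  - eapply is_IRInt_ext;
      [|apply is_IRInt_plus; [apply is_IRInt_scal, is_IRInt_scal, is_IRInt_ind|exact IH]].
    intros y; cbv beta.
    rewrite <- ind_mul_phase, <- ind_scale by assumption.
    unfold Keps, step; cbn; ring.
Qed.

Lemma mul_conv_phase c eps i ks x : c * conv_phase eps i ks x =
  fold_right (fun '(w, a, b) acc =>
    w * (/ eps * (c * seg_len (phase_lo eps i (x - b * eps)) (phase_hi eps i (x - a * eps)))) + acc)
    0 ks.
Proof. unfold conv_phase; induction ks as [|[[w a] b] ks IH]; cbn; [ring|rewrite <- IH; ring]. Qed.

Definition iso3 (a b : R) (i j : nat) : R :=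
  if (i =? j)%nat then 0 else if (i + j =? 3)%nat then a else b.

Ltac split_sum :=
  lazymatch goal with
  | |- is_IRInt (fun x => _ * (/ _ * _) + _) _ =>
      apply is_IRInt_plus; [apply is_IRInt_scal, is_IRInt_scal | split_sum]
  | |- is_IRInt (fun x => 0) _ => apply is_IRInt_0; intros; reflexivity
  end.

Ltac split_pieces :=
  eapply is_IRInt_eq;
  [ eapply is_IRInt_ext; [intros x; symmetry; apply mul_conv_phase|];
    cbn [kernel_steps fold_right Nat.add Nat.eqb]; split_sum
  | cbn [iso3 Nat.add Nat.eqb]; unfold delta1, delta2 ].

Ltac piece_cases :=
  intros x; unfold u, phase_lo, phase_hi, seg_len; cbv beta iota; ind_cases.
Ltac piece_0 := apply is_IRInt_0; piece_cases.
Ltac piece_affine p q al be :=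
  eapply is_IRInt_ext; [|apply (is_IRInt_ind_affine p q al be); lra]; piece_cases.
(* A tent of height w on [c - w, c + w]; its two closed sides both contain the
   apex c, whence the correction on the degenerate interval [c, c]. *)
Ltac piece_tent c w :=
  eapply is_IRInt_ext;
  [|apply is_IRInt_plus;
    [apply (is_IRInt_ind_affine (c - w) c 1 (w - c)); lra
    |apply is_IRInt_plus;
      [apply (is_IRInt_ind_affine c (c + w) (-1) (c + w)); lra
      |apply (is_IRInt_ind_affine c c 0 (- w)); lra]]];
  piece_cases.

Lemma is_IRInt_pair_energy eps i j : 0 < eps -> In (i, j) I3 ->
  is_IRInt (fun x => u eps j x * conv_phase eps i (kernel_steps i j) x)
    (iso3 0 (eps * (4 * delta1 + delta2 / 2)) i j).
Proof.
  intros Heps H; repeat destruct H as [H|H]; try injection H as <- <-; try contradiction.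
  - split_pieces; [piece_0|field; lra].
  - split_pieces; [piece_affine (- eps) eps 0 (2 * eps)|piece_0|piece_affine 0 eps 1 0
                  |field; lra].
  - split_pieces; [piece_0|field; lra].
  - split_pieces; [piece_0|piece_affine (- eps) eps 0 (2 * eps)|piece_affine (- eps) 0 (-1) 0
                  |field; lra].
  - split_pieces; [piece_0|piece_tent (10 * eps) (2 * eps)
                  |piece_affine eps (2 * eps) (-1) (2 * eps)|field; lra].
  - split_pieces; [piece_tent (-10 * eps) (2 * eps)|piece_0
                  |piece_affine (-2 * eps) (- eps) 1 (2 * eps)|field; lra].
Qed.

Lemma sumI3_iso3 a b : sumI3 (iso3 a b) = 2 * a + 4 * b.
Proof. unfold sumI3, iso3; cbn; ring. Qed.

Lemma Eeps_u_eps eps : 0 < eps -> Eeps_is eps (16 * delta1 + 2 * delta2).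
Proof.
  intros Heps.
  exists (fun i j => conv_phase eps i (kernel_steps i j)),
    (iso3 0 (eps * (4 * delta1 + delta2 / 2))); split.
  - intros i j Hij; split.
    + intros x; apply is_IRInt_IInt; eapply is_IRInt_ext;
        [|apply is_IRInt_conv_step; [exact Heps|apply (proj1 (in_I3 i j) Hij)]].
      intros y; unfold Keps; rewrite K_step by exact Hij; reflexivity.
    + apply is_IRInt_IInt, is_IRInt_pair_energy; assumption.
  - rewrite sumI3_iso3; field; lra.
Qed.



(** * Surface tensions and reciprocal mobilities *)

Lemma is_IRInt_abs_ind d : 0 <= d -> is_IRInt (fun x => Rabs x * ind (- d) d x) (d * d).
Proof.
  intros Hd; eapply is_IRInt_eq.
  - eapply is_IRInt_ext; [|apply is_IRInt_plus;
      [apply (is_IRInt_ind_affine (- d) 0 (-1) 0)|apply (is_IRInt_ind_affine 0 d 1 0)]; lra].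
    intros x; cbv beta; ind_cases.
  - field.
Qed.

Lemma is_IRInt_abs_ind_pair c d : 0 <= c <= d ->
  is_IRInt (fun x => Rabs x * (ind (- d) (- c) x + ind c d x)) (d * d - c * c).
Proof.
  intros Hcd; eapply is_IRInt_eq.
  - eapply is_IRInt_ext; [|apply is_IRInt_plus;
      [apply (is_IRInt_ind_affine (- d) (- c) (-1) 0)|apply (is_IRInt_ind_affine c d 1 0)]; lra].
    intros x; cbv beta; ind_cases.
  - field.
Qed.

Lemma is_IRInt_abs_K i j : In (i, j) I3 ->
  is_IRInt (fun x => Rabs x * K i j x) (2 * iso3 (1 / 2) (15 / 32) i j).
Proof.
  assert (K12 : is_IRInt (fun x => Rabs x * ind (-1) 1 x) (2 * (1 / 2))).
  { eapply is_IRInt_eq; [apply is_IRInt_abs_ind; lra|field]. }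
  assert (K3 : is_IRInt (fun x => Rabs x *
      (delta1 * (ind (-11) (-9) x + ind 9 11 x) + delta2 * ind (-1) 1 x)) (2 * (15 / 32))).
  { eapply is_IRInt_eq.
    - eapply is_IRInt_ext; [|apply is_IRInt_plus;
        [apply (is_IRInt_scal delta1), (is_IRInt_abs_ind_pair 9 11)
        |apply (is_IRInt_scal delta2), (is_IRInt_abs_ind 1)]; lra].
      intros x; cbv beta; change (- (11)) with (-11); change (- (9)) with (-9);
        change (- (1)) with (-1); ring.
    - unfold delta1, delta2; field. }
  intros H; repeat destruct H as [H|H]; try injection H as <- <-; try contradiction;
    assumption.
Qed.

Lemma sigma_iso3 (sigma : nat -> nat -> R)
  (Hsig : forall i j, In i idx3 -> In j idx3 -> i <> j ->
            IInt (fun x => Rabs x * K i j x) (2 * sigma i j))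
  (Hsig0 : forall i, sigma i i = 0) i j :
  In i idx3 -> In j idx3 -> sigma i j = iso3 (1 / 2) (15 / 32) i j.
Proof.
  intros Hi Hj; destruct (Nat.eq_dec i j) as [<-|Hij].
  - unfold iso3; rewrite Nat.eqb_refl; apply Hsig0.
  - apply Rmult_eq_reg_l with 2; [|lra].
    apply (IInt_unique (fun x => Rabs x * K i j x)); [now apply Hsig|].
    apply is_IRInt_IInt, is_IRInt_abs_K, in_I3; auto.
Qed.

Lemma K_at_0 i j : In (i, j) I3 -> K i j 0 = if (i + j =? 3)%nat then 1 else delta2.
Proof.
  intros H; repeat destruct H as [H|H]; try injection H as <- <-; try contradiction;
    cbn; ind_cases.
Qed.

Lemma muinv_iso3 i j : In i idx3 -> In j idx3 -> muinv i j = iso3 2 (5 / 8) i j.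
Proof.
  intros Hi Hj; unfold muinv, mu, iso3; destruct (Nat.eq_dec i j) as [<-|Hij].
  - now rewrite Nat.eqb_refl.
  - apply Nat.eqb_neq in Hij as Eij; rewrite Eij, Rinv_inv, K_at_0 by (apply in_I3; auto).
    destruct (i + j =? 3)%nat; unfold delta2; lra.
Qed.

Lemma iso3_triangle a b : 0 <= a <= 2 * b ->
  forall i j k, In i idx3 -> In j idx3 -> In k idx3 ->
    iso3 a b i j + iso3 a b j k >= iso3 a b i k.
Proof.
  intros Hab i j k Hi Hj Hk.
  repeat destruct Hi as [<-|Hi]; repeat destruct Hj as [<-|Hj];
    repeat destruct Hk as [<-|Hk]; try contradiction; cbn; lra.
Qed.

Lemma cnsd_iso3 a b : 0 <= a <= 4 * b -> cnsd (iso3 a b).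
Proof.
  intros Hab xi Hxi; unfold sum3, idx3, iso3 in *; cbn in *.
  replace (xi 3%nat) with (- (xi 1%nat + xi 2%nat)) by lra.
  pose proof (Rmult_le_pos a ((xi 1%nat - xi 2%nat) * (xi 1%nat - xi 2%nat))
    ltac:(lra) ltac:(apply Rle_0_sqr)).
  pose proof (Rmult_le_pos (4 * b - a) ((xi 1%nat + xi 2%nat) * (xi 1%nat + xi 2%nat))
    ltac:(lra) ltac:(apply Rle_0_sqr)).
  nra.
Qed.

Lemma cnsd_ext (A B : nat -> nat -> R) :
  (forall i j, In i idx3 -> In j idx3 -> A i j = B i j) -> cnsd B -> cnsd A.
Proof.
  intros E HB xi Hxi; specialize (HB xi Hxi); unfold sum3 in *; cbn in *.
  rewrite !E by (cbn; tauto); exact HB.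
Qed.

(** * The limit configuration *)

Lemma u_L1_dist_le eps i : 0 < eps -> In i idx3 ->
  exists l, IInt (fun x => Rabs (u eps i x - u0 i x)) l /\ l <= 2 * eps.
Proof.
  intros Heps Hi; repeat destruct Hi as [<-|Hi]; try contradiction.
  - exists (eps + 0); split; [|lra]; apply is_IRInt_IInt.
    eapply is_IRInt_eq; [eapply is_IRInt_ext; [|apply is_IRInt_plus;
      [apply (is_IRInt_ind_affine 0 eps 0 1)|apply (is_IRInt_ind_affine eps eps 0 (-1))]; lra]|lra].
    intros x; cbv beta; unfold u, u0; ind_cases.
  - exists (eps + 0); split; [|lra]; apply is_IRInt_IInt.
    eapply is_IRInt_eq; [eapply is_IRInt_ext; [|apply is_IRInt_plus;
      [apply (is_IRInt_ind_affine (- eps) 0 0 1)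
      |apply (is_IRInt_ind_affine (- eps) (- eps) 0 (-1))]; lra]|lra].
    intros x; cbv beta; unfold u, u0; ind_cases.
  - exists (2 * eps); split; [|lra]; apply is_IRInt_IInt.
    eapply is_IRInt_eq;
      [eapply is_IRInt_ext; [|apply (is_IRInt_ind_affine (- eps) eps 0 1); lra]|lra].
    intros x; cbv beta; unfold u, u0; ind_cases.
Qed.

Lemma closure_ge c x : closure (fun y => c <= y) x <-> c <= x.
Proof.
  split.
  - intros H; destruct (Rle_dec c x) as [|Hx]; [assumption|].
    destruct (H (c - x)) as [y [Hy Hxy]]; [lra|].
    pose proof (Rle_abs (y - x)); lra.
  - intros H e He; exists x; split; [assumption|].
    rewrite Rminus_diag, Rabs_R0; exact He.
Qed.

Lemma closure_le c x : closure (fun y => y <= c) x <-> x <= c.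
Proof.
  split.
  - intros H; destruct (Rle_dec x c) as [|Hx]; [assumption|].
    destruct (H (x - c)) as [y [Hy Hxy]]; [lra|].
    pose proof (Rabs_maj2 (y - x)); lra.
  - intros H e He; exists x; split; [assumption|].
    rewrite Rminus_diag, Rabs_R0; exact He.
Qed.

Lemma closure_not_ge c x : closure (fun y => ~ c <= y) x <-> x <= c.
Proof.
  split.
  - intros H; destruct (Rle_dec x c) as [|Hx]; [assumption|].
    destruct (H (x - c)) as [y [Hy Hxy]]; [lra|].
    pose proof (Rabs_maj2 (y - x)); lra.
  - intros H e He; exists (x - e / 2); split; [lra|].
    replace (x - e / 2 - x) with (- (e / 2)) by ring.
    rewrite Rabs_Ropp, Rabs_right; lra.
Qed.

Lemma closure_not_le c x : closure (fun y => ~ y <= c) x <-> c <= x.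
Proof.
  split.
  - intros H; destruct (Rle_dec c x) as [|Hx]; [assumption|].
    destruct (H (c - x)) as [y [Hy Hxy]]; [lra|].
    pose proof (Rle_abs (y - x)); lra.
  - intros H e He; exists (x + e / 2); split; [lra|].
    replace (x + e / 2 - x) with (e / 2) by ring.
    rewrite Rabs_right; lra.
Qed.

Lemma bdry_Sigma1 x : bdry (Sigma 1) x <-> x = 0.
Proof. unfold bdry, Sigma; rewrite closure_ge, closure_not_ge; lra. Qed.

Lemma bdry_Sigma2 x : bdry (Sigma 2) x <-> x = 0.
Proof. unfold bdry, Sigma; rewrite closure_le, closure_not_le; lra. Qed.

Lemma not_bdry_Sigma3 x : ~ bdry (Sigma 3) x.
Proof. intros [H _]; destruct (H 1 Rlt_0_1) as [y [[] _]]. Qed.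

Lemma H0_is_singleton (P : R -> Prop) c : (forall x, P x <-> x = c) -> H0_is P 1.
Proof.
  intros HP; exists [c]; split; [repeat constructor; auto|split; [|reflexivity]].
  intros x; rewrite HP; cbn; intuition.
Qed.

Lemma H0_is_empty (P : R -> Prop) : (forall x, ~ P x) -> H0_is P 0.
Proof.
  intros HP; exists []; split; [constructor|split; [|reflexivity]].
  intros x; cbn; split; [apply HP|contradiction].
Qed.

Lemma Esharp_u0 (sigma : nat -> nat -> R) :
  Esharp_is sigma (sigma 1%nat 2%nat + sigma 2%nat 1%nat).
Proof.
  exists (fun i j => if (i + j =? 3)%nat then 1%nat else 0%nat); split.
  - intros i j H; repeat destruct H as [H|H]; try injection H as <- <-; try contradiction; cbn.
    + apply H0_is_singleton with 0; intros x; rewrite bdry_Sigma1, bdry_Sigma2; tauto.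
    + apply H0_is_empty; intros x [_ H]; exact (not_bdry_Sigma3 x H).
    + apply H0_is_singleton with 0; intros x; rewrite bdry_Sigma1, bdry_Sigma2; tauto.
    + apply H0_is_empty; intros x [_ H]; exact (not_bdry_Sigma3 x H).
    + apply H0_is_empty; intros x [H _]; exact (not_bdry_Sigma3 x H).
    + apply H0_is_empty; intros x [H _]; exact (not_bdry_Sigma3 x H).
  - unfold sumI3; cbn; ring.
Qed.

Theorem mainTheorem6 (sigma : nat -> nat -> R)
  (Hsig : forall i j, In i idx3 -> In j idx3 -> i <> j ->
            IInt (fun x => Rabs x * K i j x) (2 * sigma i j))
  (Hsig0 : forall i, sigma i i = 0) :
  (forall i j k, In i idx3 -> In j idx3 -> In k idx3 ->
     sigma i j + sigma j k >= sigma i k) /\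
  cnsd sigma /\ cnsd muinv /\
  (forall eps, 0 < eps -> Eeps_is eps (16 * delta1 + 2 * delta2)) /\
  16 * delta1 + 2 * delta2 = 7 / 8 /\
  (forall i, In i idx3 -> forall eta, 0 < eta -> exists d, 0 < d /\
     forall eps, 0 < eps < d -> exists l,
       IInt (fun x => Rabs (u eps i x - u0 i x)) l /\ l < eta) /\
  Esharp_is sigma (2 * sigma 1%nat 2%nat) /\ 2 * sigma 1%nat 2%nat = 1 /\
  (exists L, L < 1 /\ forall eta d, 0 < eta -> 0 < d ->
     exists eps l, 0 < eps < d /\ Eeps_is eps l /\ l < L + eta) /\
  muinv 1%nat 2%nat > muinv 1%nat 3%nat + muinv 3%nat 2%nat.
Proof.
  pose proof (sigma_iso3 sigma Hsig Hsig0) as Hs.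
  assert (Hs12 : sigma 1%nat 2%nat = 1 / 2) by (apply Hs; cbn; tauto).
  assert (Hs21 : sigma 2%nat 1%nat = 1 / 2) by (apply Hs; cbn; tauto).
  assert (Hval : 16 * delta1 + 2 * delta2 = 7 / 8) by (unfold delta1, delta2; lra).
  repeat split.
  - intros i j k Hi Hj Hk; rewrite !Hs by assumption; apply iso3_triangle; lra || assumption.
  - apply (cnsd_ext _ _ Hs), cnsd_iso3; lra.
  - apply (cnsd_ext _ _ muinv_iso3), cnsd_iso3; lra.
  - exact Eeps_u_eps.
  - exact Hval.
  - intros i Hi eta Heta; exists (eta / 2); split; [lra|].
    intros eps Heps; destruct (u_L1_dist_le eps i) as [l [Hl Hle]]; [lra|assumption|].
    exists l; split; [exact Hl|lra].
  - replace (2 * sigma 1%nat 2%nat) with (sigma 1%nat 2%nat + sigma 2%nat 1%nat) by lra.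
    apply Esharp_u0.
  - lra.
  - exists (7 / 8); split; [lra|].
    intros eta d Heta Hd; exists (d / 2), (16 * delta1 + 2 * delta2).
    split; [lra|split; [apply Eeps_u_eps; lra|lra]].
  - rewrite !muinv_iso3 by (cbn; tauto); cbn; lra.
Qed.
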